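(* Assume Assumption A and let $(A_i,\tau_i)_{i=1}^n$ be a solution of system (S) with nonnegative initial data $\varphi_i\in X_\alpha$ satisfying $\int_{-\tau_{i0}}^0 f_i(Z_{i\varphi}(\sigma))\,d\sigma=1$ for all $i=1,\dots,n$. Then for each $i=1,\dots,n$ there exists $t_i^*>0$ such that $t_i^*-\tau_i(t_i^* )=0$.
   Context: For $\alpha>0$, $X_\alpha:=\{\phi\in C((-\infty,0]): e^{-\alpha|\cdot|}\phi(\cdot)\in BUC((-\infty,0])\cap \mathrm{Lip}((-\infty,0])\}$. The $n$-species system (S): for $i=1,\dots,n$, $$A_i'(t)=-\mu_{A_i}A_i(t)+\beta_i e^{-\mu_{J_i}\tau_i(t)}\frac{f_i(Z_i(t))}{f_i(Z_i(t-\tau_i(t)))}A_i(t-\tau_i(t)),\quad t\ge0,$$ $$\int_{t-\tau_i(t)}^{t}f_i(Z_i(\sigma))\,d\sigma=\int_{-\tau_{i0}}^{0}f_i(Z_{i\varphi}(\sigma))\,d\sigma,\quad t\ge0,$$ with $A_i(t)=\varphi_i(t)$ for $t\le0$, $\tau_i(0)=\tau_{i0}\ge0$, where $Z_i(t)=\sum_{j=1}^n\zeta_{ij}A_j(t)$, $Z_{i\varphi}(t)=\sum_{j=1}^n\zeta_{ij}\varphi_j(t)$, $\zeta_{ij}\ge0$. A solution consists of continuous $A_i:\mathbb{R}\to[0,\infty)$, differentiable on $[0,\infty)$, and $\tau_i:[0,\infty)\to[0,\infty)$ satisfying these equations for all $t\ge0$. Assumption A: for each $i$, (i) $\mu_{A_i}>0$,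 $\mu_{J_i}>0$, $\beta_i>0$, $\zeta_{ii}>0$; (ii) $f_i:\mathbb{R}\to(0,\infty)$ is Lipschitz continuous and continuously differentiable with $f_i>0$, $f_i'\le0$ on $\mathbb{R}$, $\lim_{x\to+\infty}f_i(x)=0$, and $\sup_{x\ge0}\frac{f_i(x)}{f_i(cx)}<+\infty$ for every $c\ge1$. *)

From Stdlib Require Import Reals Lra.
Open Scope R_scope.

Fixpoint sumR (n : nat) (g : nat -> R) : R :=
  match n with O => 0 | S m => sumR m g + g m end.

Definition cont_nonpos (phi : R -> R) : Prop :=
  forall s, s <= 0 -> forall eps, eps > 0 -> exists delta, delta > 0 /\
    forall s', s' <= 0 -> Rabs (s' - s) < delta -> Rabs (phi s' - phi s) < eps.

Definition BUC_nonpos (g : R -> R) : Prop :=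
  (exists M, forall s, s <= 0 -> Rabs (g s) <= M) /\
  (forall eps, eps > 0 -> exists delta, delta > 0 /\
     forall s s', s <= 0 -> s' <= 0 -> Rabs (s' - s) < delta ->
       Rabs (g s' - g s) < eps).

Definition Lip_nonpos (g : R -> R) : Prop :=
  exists L, forall s s', s <= 0 -> s' <= 0 -> Rabs (g s - g s') <= L * Rabs (s - s').

Definition X_alpha (alpha : R) (phi : R -> R) : Prop :=
  cont_nonpos phi /\
  BUC_nonpos (fun s => exp (- alpha * Rabs s) * phi s) /\
  Lip_nonpos (fun s => exp (- alpha * Rabs s) * phi s).

Definition integral_eq (g : R -> R) (a b v : R) : Prop :=
  exists pr : Riemann_integrable g a b, RiemannInt pr = v.

Definition deriv_nonneg (A : R -> R) (t l : R) : Prop :=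
  forall eps, eps > 0 -> exists delta, delta > 0 /\
    forall h, h <> 0 -> Rabs h < delta -> 0 <= t + h ->
      Rabs ((A (t + h) - A t) / h - l) < eps.

Definition AssumptionA (n : nat) (muA muJ beta : nat -> R) (zeta : nat -> nat -> R)
  (f : nat -> R -> R) : Prop :=
  forall i, (i < n)%nat ->
    muA i > 0 /\ muJ i > 0 /\ beta i > 0 /\ zeta i i > 0 /\
    (forall j, (j < n)%nat -> zeta i j >= 0) /\
    (exists L, forall x y, Rabs (f i x - f i y) <= L * Rabs (x - y)) /\
    (exists f', (forall x, derivable_pt_lim (f i) x (f' x)) /\ continuity f' /\
                (forall x, f' x <= 0)) /\
    (forall x, f i x > 0) /\
    (forall eps, eps > 0 -> exists X, forall x, x >= X -> Rabs (f i x) < eps) /\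
    (forall c, c >= 1 -> exists M, forall x, x >= 0 -> f i x / f i (c * x) <= M).

Definition Zfun (n : nat) (zeta : nat -> nat -> R) (A : nat -> R -> R) (i : nat) (t : R) : R :=
  sumR n (fun j => zeta i j * A j t).

Definition is_solution (n : nat) (muA muJ beta : nat -> R) (zeta : nat -> nat -> R)
  (f : nat -> R -> R) (phi : nat -> R -> R) (tau0 : nat -> R)
  (A : nat -> R -> R) (tau : nat -> R -> R) : Prop :=
  forall i, (i < n)%nat ->
    continuity (A i) /\
    (forall t, 0 <= A i t) /\
    (forall t, t <= 0 -> A i t = phi i t) /\
    (forall t, 0 <= t -> 0 <= tau i t) /\
    tau0 i >= 0 /\ tau i 0 = tau0 i /\
    (forall t, 0 <= t ->
       deriv_nonneg (A i) t
         (- muA i * A i t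
          + beta i * exp (- muJ i * tau i t)
            * (f i (Zfun n zeta A i t) / f i (Zfun n zeta A i (t - tau i t)))
            * A i (t - tau i t))) /\
    (forall t, 0 <= t ->
       exists v, integral_eq (fun s => f i (Zfun n zeta A i s)) (t - tau i t) t v /\
                 integral_eq (fun s => f i (Zfun n zeta phi i s)) (- tau0 i) 0 v).

From Stdlib Require Import Reals Lra Lia.
From Coquelicot Require Import Coquelicot.
Open Scope R_scope.

(* Each population is bounded.  Since exp(mu t) A(t) is nondecreasing, a large delayed value
   A(t - tau t) keeps A large on the whole window [t - tau t, t]; there g = f(Z) is small, and
   since g integrates to 1 over the window, the delay tau t is long and the birth factor
   exp(- muJ tau t) is tiny.  The derivative of the window start u = t - tau t is
   g(t) / g(u(t)), which lets exp(mu t - m tau t) serve as a comparison function for the birth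
   term and turns this into a uniform bound.
   Bounded populations keep g_i = f_i(Z_i) above a positive constant on [0, oo), so the
   primitive G of g_i reaches 1 at some t1 > 0; the constraint G(t) - G(t - tau_i t) = 1 then
   gives G(t1 - tau_i t1) = 0 = G(0), i.e. tau_i(t1) = t1. *)

Lemma ex_RInt_continuity (g : R -> R) a b : continuity g -> ex_RInt g a b.
Proof.
  intros Hg; apply (ex_RInt_continuous (V := R_CompleteNormedModule)).
  intros x _; apply continuity_pt_filterlim, Hg.
Qed.

Lemma RInt_Chasles_continuity (g : R -> R) a b c : continuity g ->
  RInt g a b + RInt g b c = RInt g a c.
Proof. intros Hg; apply (RInt_Chasles g a b c); apply ex_RInt_continuity, Hg. Qed.

Lemma RInt_gt_0_continuity (g : R -> R) a b : continuity g -> (forall x, 0 < g x) ->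
  a < b -> 0 < RInt g a b.
Proof.
  intros Hg Hpos Hab; apply RInt_gt_0; auto.
  intros x _; apply continuity_pt_filterlim, Hg.
Qed.

Lemma RInt_le_const (g : R -> R) a b c : continuity g -> a <= b ->
  (forall x, a <= x <= b -> g x <= c) -> RInt g a b <= (b - a) * c.
Proof.
  intros Hg Hab Hc.
  replace ((b - a) * c) with (RInt (fun _ => c) a b) by (rewrite RInt_const; reflexivity).
  apply RInt_le; auto using ex_RInt_continuity, ex_RInt_const.
  intros x Hx; apply Hc; lra.
Qed.

Lemma RInt_ge_const (g : R -> R) a b c : continuity g -> a <= b ->
  (forall x, a <= x <= b -> c <= g x) -> (b - a) * c <= RInt g a b.
Proof.
  intros Hg Hab Hc.
  replace ((b - a) * c) with (RInt (fun _ => c) a b) by (rewrite RInt_const; reflexivity).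
  apply RInt_le; auto using ex_RInt_continuity, ex_RInt_const.
  intros x Hx; apply Hc; lra.
Qed.

Lemma RInt_of_integral_eq (g : R -> R) a b v : integral_eq g a b v -> RInt g a b = v.
Proof. intros [pr E]; rewrite (RInt_Reals g a b pr); exact E. Qed.

Definition primitive (g : R -> R) (x : R) : R := RInt g 0 x.

Section Primitive.

Variable g : R -> R.
Hypothesis g_cont : continuity g.

Lemma primitive_0 : primitive g 0 = 0.
Proof. apply (RInt_point 0 g). Qed.

Lemma primitive_sub x y : primitive g y - primitive g x = RInt g x y.
Proof. unfold primitive; rewrite <- (RInt_Chasles_continuity g 0 x y g_cont); ring. Qed.

Lemma primitive_derivable x : derivable_pt_lim (primitive g) x (g x).
Proof.
  apply is_derive_Reals, (is_derive_RInt (V := R_NormedModule) g _ 0).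
  - apply filter_forall; intros y; apply (RInt_correct (V := R_CompleteNormedModule)).
    apply ex_RInt_continuity, g_cont.
  - apply continuity_pt_filterlim, g_cont.
Qed.

Lemma primitive_continuity : continuity (primitive g).
Proof. intros x; apply derivable_continuous_pt; exists (g x); apply primitive_derivable. Qed.

Hypothesis g_pos : forall x, 0 < g x.

Lemma primitive_lt x y : x < y -> primitive g x < primitive g y.
Proof.
  intros Hxy; assert (Hpos : 0 < RInt g x y) by (apply RInt_gt_0_continuity; auto).
  rewrite <- primitive_sub in Hpos; lra.
Qed.

End Primitive.

Lemma nonincreasing_of_derivative_nonpos (F dF : R -> R) a b : a <= b ->
  (forall x, a < x < b -> derivable_pt_lim F x (dF x)) ->
  (forall x, a <= x <= b -> continuity_pt F x) ->
  (forall x, a < x < b -> dF x <= 0) -> F b <= F a.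
Proof.
  intros [Hab|<-] HD HC Hneg; [|lra].
  assert (prF : forall c, a < c < b -> derivable_pt F c).
  { intros c Hc; exists (dF c); apply HD, Hc. }
  assert (prid : forall c, a < c < b -> derivable_pt id c).
  { intros c _; apply derivable_pt_id. }
  destruct (MVT F id a b prF prid Hab HC) as [c [Hc E]].
  { intros; apply derivable_continuous_pt, derivable_pt_id. }
  rewrite (derive_pt_eq_0 F c (dF c) (prF c Hc) (HD c Hc)) in E.
  rewrite (derive_pt_eq_0 id c 1 (prid c Hc) (derivable_pt_lim_id c)) in E.
  unfold id in E; specialize (Hneg c Hc); nra.
Qed.

Lemma is_lim_diff_quotient (F : R -> R) (x l : R) : derivable_pt_lim F x l ->
  is_lim (fun h => (F (x + h) - F x) / h) 0 l.
Proof.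
  intros HF; apply is_lim_spec; intros eps.
  destruct (HF eps (cond_pos eps)) as [d Hd].
  exists d; intros h Hh Hh0; apply Hd; auto.
  change (Rabs (h - 0) < d) in Hh; rewrite Rminus_0_r in Hh; exact Hh.
Qed.

Lemma derivable_pt_lim_of_is_lim (F : R -> R) (x l : R) :
  is_lim (fun h => (F (x + h) - F x) / h) 0 l -> derivable_pt_lim F x l.
Proof.
  intros HF eps Heps; apply is_lim_spec in HF.
  destruct (HF (mkposreal eps Heps)) as [d Hd].
  exists d; intros h Hh0 Hh; apply Hd; auto.
  change (Rabs (h - 0) < d); rewrite Rminus_0_r; exact Hh.
Qed.

Lemma derivable_pt_lim_of_deriv_nonneg (F : R -> R) t l : 0 < t -> deriv_nonneg F t l ->
  derivable_pt_lim F t l.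
Proof.
  intros Ht HF eps Heps; destruct (HF eps Heps) as [d [Hd HFd]].
  assert (Hdt : 0 < Rmin d t) by (apply Rmin_glb_lt; lra).
  exists (mkposreal _ Hdt); intros h Hh0 Hh; simpl in Hh.
  assert (Hhd : Rabs h < d) by (apply (Rlt_le_trans _ _ _ Hh), Rmin_l).
  assert (Hht : Rabs h < t) by (apply (Rlt_le_trans _ _ _ Hh), Rmin_r).
  apply HFd; auto; destruct (Rabs_def2 _ _ Hht); lra.
Qed.

Lemma exp_le x y : x <= y -> exp x <= exp y.
Proof. intros [h|<-]; [left; apply exp_increasing, h|lra]. Qed.

Lemma derivable_pt_lim_exp_mul (F : R -> R) c x dF : derivable_pt_lim F x dF ->
  derivable_pt_lim (fun w => exp (c * w) * F w) x (exp (c * x) * (c * F x + dF)).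
Proof.
  intros HF; apply is_derive_Reals in HF; apply is_derive_Reals.
  evar (l : R); replace (exp (c * x) * (c * F x + dF)) with l.
  - apply (is_derive_mult (fun w => exp (c * w)) F); [|exact HF|intros; apply Rmult_comm].
    apply (is_derive_comp exp (fun w => c * w)); [apply is_derive_Reals, derivable_pt_lim_exp|].
    auto_derive; auto.
  - unfold l; simpl; unfold plus, scal, mult; simpl; unfold plus, mult; simpl; ring.
Qed.

Lemma derivable_pt_lim_exp_affine (F : R -> R) a b x dF : derivable_pt_lim F x dF ->
  derivable_pt_lim (fun w => exp (a * w + b * F w)) x (exp (a * x + b * F x) * (a + b * dF)).
Proof.
  intros HF; apply is_derive_Reals in HF; apply is_derive_Reals.
  evar (l : R); replace (exp (a * x + b * F x) * (a + b * dF)) with l.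
  - apply (is_derive_comp exp (fun w => a * w + b * F w)).
    + apply is_derive_Reals, derivable_pt_lim_exp.
    + apply (is_derive_plus (fun w => a * w) (fun w => b * F w)); [auto_derive; auto|].
      apply (is_derive_scal F), HF.
  - unfold l; simpl; unfold plus, scal, mult; simpl; unfold plus, mult; simpl; ring.
Qed.

Lemma exp_decay_le c b eps : 0 < c -> 0 < b -> 0 < eps ->
  exists D, 0 < D /\ b * exp (- c * D) <= eps.
Proof.
  intros Hc Hb Heps; set (D := Rmax 1 (ln (b / eps) / c)); exists D; split.
  - apply (Rlt_le_trans _ 1); [lra|apply Rmax_l].
  - assert (HD : ln (b / eps) <= c * D).
    { replace (ln (b / eps)) with (c * (ln (b / eps) / c)) by (field; lra).
      apply Rmult_le_compat_l; [lra|apply Rmax_r]. }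
    assert (He : exp (- c * D) <= exp (- ln (b / eps))) by (apply exp_le; lra).
    rewrite exp_Ropp, exp_ln in He by (apply Rdiv_lt_0_compat; lra).
    replace eps with (b * / (b / eps)) by (field; lra).
    apply Rmult_le_compat_l; lra.
Qed.

Lemma strict_incr_injective (G : R -> R) : (forall x y, x < y -> G x < G y) ->
  forall x y, G x = G y -> x = y.
Proof.
  intros HG x y E; destruct (Rtotal_order x y) as [h|[h|h]]; auto.
  - specialize (HG x y h); lra.
  - specialize (HG y x h); lra.
Qed.

Lemma strict_incr_le (G : R -> R) : (forall x y, x < y -> G x < G y) ->
  forall x y, x <= y -> G x <= G y.
Proof. intros HG x y [Hxy|<-]; [left; apply HG, Hxy|lra]. Qed.

Lemma locally_shift (P : R -> Prop) (x : R) : locally x P -> locally 0 (fun h => P (x + h)).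
Proof.
  intros [d Hd]; exists d; intros h Hh; apply Hd.
  change (Rabs (x + h - x) < d); change (Rabs (h - 0) < d) in Hh.
  replace (x + h - x) with (h - 0) by ring; exact Hh.
Qed.

Section LevelSet.

Variables G F v : R -> R.
Hypothesis G_incr : forall x y, x < y -> G x < G y.

Lemma continuity_pt_of_level_set (s0 : R) :
  locally s0 (fun s => G (v s) = F s) -> continuity_pt F s0 -> continuity_pt v s0.
Proof.
  intros Heq HF; apply continuity_pt_locally; intros eps.
  set (a := v s0).
  assert (Ea : G a = F s0) by exact (locally_singleton _ _ Heq).
  set (eta := Rmin (G (a + eps) - G a) (G a - G (a - eps))).
  assert (Heta : 0 < eta).
  { assert (G a < G (a + eps)) by (apply G_incr; destruct eps; simpl; lra).
    assert (G (a - eps) < G a) by (apply G_incr; destruct eps; simpl; lra).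
    apply Rmin_glb_lt; lra. }
  pose proof (proj1 (continuity_pt_locally F s0) HF (mkposreal eta Heta)) as HFe.
  generalize (filter_and _ _ Heq HFe); apply filter_imp; intros s [Es Hs]; simpl in Hs.
  rewrite <- Es, <- Ea in Hs; destruct (Rabs_def2 _ _ Hs) as [Hs1 Hs2].
  assert (eta <= G (a + eps) - G a) by apply Rmin_l.
  assert (eta <= G a - G (a - eps)) by apply Rmin_r.
  apply Rabs_def1.
  - destruct (Rlt_or_le (v s - a) eps) as [h|h]; [exact h|].
    assert (G (a + eps) <= G (v s)) by (apply (strict_incr_le G G_incr); lra); lra.
  - destruct (Rlt_or_le (- eps) (v s - a)) as [h|h]; [exact h|].
    assert (G (v s) <= G (a - eps)) by (apply (strict_incr_le G G_incr); lra); lra.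
Qed.

Lemma derivable_pt_lim_of_level_set (s0 lF lG : R) :
  (forall x y, F x = F y -> x = y) ->
  locally s0 (fun s => G (v s) = F s) ->
  derivable_pt_lim F s0 lF -> derivable_pt_lim G (v s0) lG -> lG <> 0 ->
  derivable_pt_lim v s0 (lF / lG).
Proof.
  intros F_inj Heq DF DG HlG.
  (* Near 0, the difference quotient of v at s0 is that of F at s0 divided by that of G
     at v s0 with increment k h. *)
  set (a := v s0); set (k := fun h => v (s0 + h) - a).
  assert (Hv : continuity_pt v s0).
  { apply continuity_pt_of_level_set; auto.
    apply derivable_continuous_pt; exists lF; exact DF. }
  assert (Heq0 := locally_shift _ _ Heq).
  assert (Hk : is_lim k 0 0).
  { apply is_lim_spec; intros eps.
    destruct (locally_shift _ _ (proj1 (continuity_pt_locally v s0) Hv eps)) as [d Hd].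
    exists d; intros h Hh _; unfold k; rewrite Rminus_0_r; apply Hd, Hh. }
  assert (Hk0 : Rbar_locally' 0 (fun h => h <> 0 /\ k h <> 0 /\
      G (a + k h) - G a = F (s0 + h) - F s0 /\ F (s0 + h) - F s0 <> 0)).
  { generalize (locally_singleton _ _ Heq); intros E0.
    destruct Heq0 as [d Hd]; exists d; intros h Hh Hh0; specialize (Hd h Hh).
    assert (Ek : a + k h = v (s0 + h)) by (unfold k; ring).
    assert (HF0 : F (s0 + h) <> F s0).
    { intros C; apply Hh0, (Rplus_eq_reg_l s0); rewrite Rplus_0_r; apply F_inj, C. }
    rewrite Ek, Hd; unfold a; rewrite E0; repeat split; auto.
    - intros C; apply HF0; rewrite <- Hd, <- E0; f_equal; unfold k, a in C; lra.
    - intros C; apply HF0; lra. }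
  assert (HG : is_lim (fun h => (G (a + k h) - G a) / k h) 0 lG).
  { apply (is_lim_comp (fun k => (G (a + k) - G a) / k) k 0 lG 0).
    - apply is_lim_diff_quotient, DG.
    - exact Hk.
    - revert Hk0; apply filter_imp; intros h (_ & H & _) E; apply H; now injection E. }
  apply derivable_pt_lim_of_is_lim.
  apply (is_lim_ext_loc (fun h => ((F (s0 + h) - F s0) / h) / ((G (a + k h) - G a) / k h))).
  - revert Hk0; apply filter_imp; intros h (Hh & Hkh & E & HF0).
    rewrite E; fold a; unfold k at 1; field; auto.
  - apply (is_lim_div _ _ 0 lF lG); [apply is_lim_diff_quotient, DF|exact HG|..].
    + intros E; apply HlG; now injection E.
    + exact I.
Qed.

End LevelSet.

Section Species.

Variables (A g tau : R -> R) (mu muJ beta tau0 : R).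
Hypotheses (mu_pos : 0 < mu) (muJ_pos : 0 < muJ) (beta_pos : 0 < beta) (tau0_ge0 : 0 <= tau0).
Hypotheses (A_cont : continuity A) (A_ge0 : forall t, 0 <= A t).
Hypotheses (g_cont : continuity g) (g_pos : forall x, 0 < g x).
Hypothesis g_small : forall eps, 0 < eps -> exists Y, forall s, Y <= A s -> g s <= eps.
Hypothesis tau_ge0 : forall t, 0 <= t -> 0 <= tau t.
Hypothesis delay_integral : forall t, 0 <= t -> RInt g (t - tau t) t = 1.
Hypothesis initial_integral : RInt g (- tau0) 0 = 1.
Hypothesis A_derivable : forall t, 0 < t -> derivable_pt_lim A t
  (- mu * A t + beta * exp (- muJ * tau t) * (g t / g (t - tau t)) * A (t - tau t)).

Let u t := t - tau t.
Let birth t := beta * exp (- muJ * tau t) * (g t / g (u t)) * A (u t).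

Lemma primitive_delay s : 0 <= s -> primitive g (u s) = primitive g s - 1.
Proof.
  intros Hs; rewrite <- (delay_integral s Hs), <- (primitive_sub g g_cont); unfold u; ring.
Qed.

Lemma delay_bounds s : 0 <= s -> - tau0 <= u s <= s.
Proof.
  intros Hs; split; [|unfold u; specialize (tau_ge0 s Hs); lra].
  assert (E : primitive g 0 - primitive g (- tau0) = 1).
  { rewrite (primitive_sub g g_cont); exact initial_integral. }
  destruct (Rle_or_lt (- tau0) (u s)) as [h|h]; [exact h|exfalso].
  assert (Hlt : primitive g (u s) < primitive g (- tau0)) by (apply primitive_lt; auto).
  assert (Hle : primitive g 0 <= primitive g s).
  { apply (strict_incr_le (primitive g)); [apply primitive_lt; auto|exact Hs]. }
  rewrite primitive_delay in Hlt by exact Hs; rewrite primitive_0 in Hle, E; lra.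
Qed.

Lemma delay_derivable s : 0 < s -> derivable_pt_lim u s (g s / g (u s)).
Proof.
  intros Hs.
  assert (Hincr : forall x y, x < y -> primitive g x < primitive g y) by (apply primitive_lt; auto).
  apply (derivable_pt_lim_of_level_set (primitive g) (fun x => primitive g x - 1)); auto.
  - intros x y E; apply (strict_incr_injective (primitive g)); auto; lra.
  - exists (mkposreal s Hs); intros x Hx; apply primitive_delay.
    change (Rabs (x - s) < s) in Hx; destruct (Rabs_def2 _ _ Hx); lra.
  - replace (g s) with (g s - 0) by ring.
    apply derivable_pt_lim_minus; [apply primitive_derivable, g_cont|apply derivable_pt_lim_const].
  - apply primitive_derivable, g_cont.
  - apply Rgt_not_eq, g_pos.
Qed.

Lemma birth_ge0 t : 0 <= birth t.
Proof.
  unfold birth; apply Rmult_le_pos; [|apply A_ge0].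
  apply Rmult_le_pos; [apply Rmult_le_pos; [lra|left; apply exp_pos]|].
  left; apply Rdiv_lt_0_compat; apply g_pos.
Qed.

Lemma scaled_A_derivable t : 0 < t ->
  derivable_pt_lim (fun w => exp (mu * w) * A w) t (exp (mu * t) * birth t).
Proof.
  intros Ht; replace (exp (mu * t) * birth t)
    with (exp (mu * t) * (mu * A t + (- mu * A t + birth t))) by ring.
  apply derivable_pt_lim_exp_mul, A_derivable, Ht.
Qed.

Lemma scaled_A_nondecreasing x y : 0 <= x <= y -> exp (mu * x) * A x <= exp (mu * y) * A y.
Proof.
  intros Hxy; apply Ropp_le_cancel.
  apply (nonincreasing_of_derivative_nonpos (fun w => - (exp (mu * w) * A w))
           (fun w => - (exp (mu * w) * birth w))); [lra|..].
  - intros w Hw; apply derivable_pt_lim_opp, scaled_A_derivable; lra.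
  - intros w _; apply (continuity_pt_opp (fun w => exp (mu * w) * A w)).
    apply continuity_pt_mult; [|apply A_cont]; reg.
  - intros w _; assert (0 < exp (mu * w)) by apply exp_pos.
    assert (0 <= birth w) by apply birth_ge0; nra.
Qed.

Lemma long_delay D Y s : 0 < D -> (forall x, Y <= A x -> D * g x <= 1) ->
  0 <= u s <= s -> Y * exp (mu * D) <= A (u s) -> D <= tau s.
Proof.
  intros HD HY Hus HA.
  destruct (Rle_or_lt D (tau s)) as [h|h]; [exact h|].
  assert (Hg : forall w, u s <= w <= s -> g w <= / D).
  { intros w Hw.
    assert (Hw' : Y <= A w).
    { destruct (Rle_or_lt Y 0) as [hY|hY]; [specialize (A_ge0 w); lra|].
      assert (exp (mu * u s) * A (u s) <= exp (mu * w) * A w)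
        by (apply scaled_A_nondecreasing; lra).
      assert (exp (mu * w) <= exp (mu * u s) * exp (mu * D))
        by (rewrite <- exp_plus; apply exp_le; unfold u in *; nra).
      assert (0 < exp (mu * w)) by apply exp_pos.
      assert (0 < exp (mu * u s)) by apply exp_pos.
      assert (Y * exp (mu * w) <= exp (mu * w) * A w) by nra; nra. }
    specialize (HY w Hw'); apply (Rmult_le_reg_l D); [exact HD|].
    rewrite Rinv_r; lra. }
  pose proof (RInt_le_const g (u s) s (/ D) g_cont ltac:(lra) Hg) as HI.
  unfold u in HI; rewrite delay_integral in HI by lra.
  replace (s - (s - tau s)) with (tau s) in HI by ring.
  apply (Rmult_le_reg_r (/ D)); [apply Rinv_0_lt_compat, HD|].
  rewrite Rinv_r; lra.
Qed.

Lemma scaled_birth_le m K s : beta * exp (- (muJ - m) * tau s) * A (u s) <= K ->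
  exp (mu * s) * birth s <= K * (exp ((mu - m) * s + m * u s) * (g s / g (u s))).
Proof.
  intros HK.
  assert (Hr : 0 < g s / g (u s)) by (apply Rdiv_lt_0_compat; apply g_pos).
  assert (HQ : 0 < exp ((mu - m) * s + m * u s)) by apply exp_pos.
  replace (exp (mu * s) * birth s) with (exp ((mu - m) * s + m * u s) * (g s / g (u s))
    * (beta * exp (- (muJ - m) * tau s) * A (u s))).
  - rewrite Rmult_comm; apply Rmult_le_compat_r; [|exact HK]; nra.
  - assert (E : exp (mu * s) * exp (- muJ * tau s)
                = exp ((mu - m) * s + m * u s) * exp (- (muJ - m) * tau s))
      by (rewrite <- !exp_plus; f_equal; unfold u; ring).
    unfold birth; transitivity ((exp (mu * s) * exp (- muJ * tau s))
      * (beta * (g s / g (u s)) * A (u s))); [rewrite E|]; ring.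
Qed.

Lemma A_le_add m K d t : 0 < m <= mu -> 0 <= K -> 0 < d <= t ->
  (forall s, d < s < t -> beta * exp (- (muJ - m) * tau s) * A (u s) <= K) ->
  A t <= A d + K / m.
Proof.
  intros Hm HK Hdt Hbirth.
  set (Q := fun s => exp ((mu - m) * s + m * u s)).
  set (r := fun s => g s / g (u s)).
  (* exp((mu - m) s + m u s) = exp(mu s - m tau s); its slope carries the factor u' = r, which
     absorbs the birth term. *)
  set (dP := fun s => exp (mu * s) * birth s - K / m * (Q s * ((mu - m) + m * r s))).
  assert (HKm : 0 <= K / m) by (apply Rdiv_le_0_compat; lra).
  assert (HD : forall s, 0 < s ->
    derivable_pt_lim (fun s => exp (mu * s) * A s - K / m * Q s) s (dP s)).
  { intros s Hs; apply (derivable_pt_lim_minus (fun s => exp (mu * s) * A s)).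
    - apply scaled_A_derivable, Hs.
    - apply (derivable_pt_lim_scal Q).
      apply derivable_pt_lim_exp_affine, delay_derivable, Hs. }
  assert (HP : exp (mu * t) * A t - K / m * Q t <= exp (mu * d) * A d - K / m * Q d).
  { apply (nonincreasing_of_derivative_nonpos (fun s => exp (mu * s) * A s - K / m * Q s) dP);
      [lra|..].
    - intros s Hs; apply HD; lra.
    - intros s Hs; apply derivable_continuous_pt; exists (dP s); apply HD; lra.
    - intros s Hs; assert (Hb := scaled_birth_le m K s (Hbirth s Hs)); fold (Q s) (r s) in Hb.
      assert (0 < Q s) by apply exp_pos.
      assert (0 <= K / m * (mu - m) * Q s) by (apply Rmult_le_pos; [apply Rmult_le_pos|]; lra).
      replace (dP s) with (exp (mu * s) * birth s - K / m * (mu - m) * Q s - K * (Q s * r s))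
        by (unfold dP; field; lra).
      lra. }
  assert (Q t <= exp (mu * t)).
  { apply exp_le; destruct (delay_bounds t) as [_ Hut]; [lra|]; nra. }
  assert (0 < Q d) by apply exp_pos.
  assert (exp (mu * d) * A d <= exp (mu * t) * A d)
    by (apply Rmult_le_compat_r; [apply A_ge0|apply exp_le; nra]).
  assert (K / m * Q t <= K / m * exp (mu * t)) by (apply Rmult_le_compat_l; lra).
  assert (0 <= K / m * Q d) by (apply Rmult_le_pos; lra).
  apply (Rmult_le_reg_l (exp (mu * t))); [apply exp_pos|lra].
Qed.

Lemma delayed_birth_le m D a1 M T s : 0 <= m <= muJ / 2 -> 0 <= a1 -> 0 < s <= T ->
  (forall x, - tau0 <= x <= T -> A x <= M) -> (a1 < A (u s) -> D <= tau s) ->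
  beta * exp (- (muJ - m) * tau s) * A (u s) <= beta * a1 + beta * exp (- (muJ / 2) * D) * M.
Proof.
  intros Hm Ha1 Hs HM Hlong.
  assert (Htau : 0 <= tau s) by (apply tau_ge0; lra).
  destruct (delay_bounds s) as [Hu1 Hu2]; [lra|].
  assert (HAu : A (u s) <= M) by (apply HM; lra).
  assert (0 <= A (u s)) by apply A_ge0.
  assert (0 < exp (- (muJ / 2) * D)) by apply exp_pos.
  assert (0 < exp (- (muJ - m) * tau s)) by apply exp_pos.
  destruct (Rle_or_lt (A (u s)) a1) as [h|h].
  - assert (exp (- (muJ - m) * tau s) <= 1) by (rewrite <- exp_0; apply exp_le; nra).
    assert (exp (- (muJ - m) * tau s) * A (u s) <= a1) by nra.
    assert (0 <= beta * exp (- (muJ / 2) * D) * M) by (apply Rmult_le_pos; nra).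
    nra.
  - assert (exp (- (muJ - m) * tau s) <= exp (- (muJ / 2) * D))
      by (apply exp_le; specialize (Hlong h); nra).
    assert (exp (- (muJ - m) * tau s) * A (u s) <= exp (- (muJ / 2) * D) * M)
      by (apply Rmult_le_compat; lra).
    nra.
Qed.

Lemma A_bounded : exists B, forall t, 0 <= t -> A t <= B.
Proof.
  destruct (continuity_ab_maj A (- tau0) 1) as [x1 [HC0 _]]; [lra|intros; apply A_cont|].
  set (C0 := A x1); set (m := Rmin mu (muJ / 2)).
  assert (Hm : 0 < m <= mu /\ m <= muJ / 2).
  { unfold m; split; [split; [apply Rmin_glb_lt|apply Rmin_l]|apply Rmin_r]; lra. }
  destruct (exp_decay_le (muJ / 2) beta (m / 2)) as [D [HD HDe]]; try lra.
  destruct (g_small (/ D)) as [Y HY]; [apply Rinv_0_lt_compat, HD|].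
  (* Above a1, a delayed value forces u s > 1 and a delay of at least D, hence a birth factor
     at most m / 2: half of the running maximum is absorbed. *)
  set (a1 := Rmax C0 (Y * exp (mu * D))).
  assert (Ha1 : C0 <= a1 /\ Y * exp (mu * D) <= a1) by (split; [apply Rmax_l|apply Rmax_r]).
  assert (HC0pos : 0 <= C0) by apply A_ge0.
  assert (Hlong : forall s, 0 < s -> a1 < A (u s) -> D <= tau s).
  { intros s Hs Ha; destruct (delay_bounds s) as [Hu1 Hu2]; [lra|].
    assert (1 < u s).
    { destruct (Rlt_or_le 1 (u s)) as [h|h]; [exact h|].
      specialize (HC0 (u s) (conj Hu1 h)); fold C0 in HC0; lra. }
    apply (long_delay D Y); [exact HD| |lra|lra].
    intros x Hx; specialize (HY x Hx); apply (Rmult_le_compat_l D) in HY; [|lra].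
    rewrite Rinv_r in HY; lra. }
  exists (2 * C0 + 2 * (beta * a1) / m); intros t Ht.
  assert (HB : 0 <= 2 * (beta * a1) / m) by (apply Rdiv_le_0_compat; nra).
  destruct (continuity_ab_maj A (- tau0) (Rmax t 1)) as [xT [HM HxT]].
  { assert (1 <= Rmax t 1) by apply Rmax_r; lra. }
  { intros; apply A_cont. }
  assert (A t <= A xT) by (apply HM; split; [lra|apply Rmax_l]).
  destruct (Rle_or_lt xT 1) as [h|h].
  - assert (A xT <= C0) by (apply HC0; lra); lra.
  - assert (0 <= A xT) by apply A_ge0.
    assert (Hbirth : forall s, 1 < s < xT ->
      beta * exp (- (muJ - m) * tau s) * A (u s) <= beta * a1 + m / 2 * A xT).
    { intros s Hs; eapply Rle_trans.
      - apply (delayed_birth_le m D a1 (A xT) (Rmax t 1)); try lra; auto; apply Hlong; lra.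
      - assert (beta * exp (- (muJ / 2) * D) * A xT <= m / 2 * A xT)
          by (apply Rmult_le_compat_r; lra); lra. }
    assert (Hstep := A_le_add m (beta * a1 + m / 2 * A xT) 1 xT
      ltac:(lra) ltac:(nra) ltac:(lra) Hbirth).
    assert (A 1 <= C0) by (apply HC0; lra).
    replace ((beta * a1 + m / 2 * A xT) / m) with (beta * a1 / m + A xT / 2) in Hstep
      by (field; lra).
    replace (2 * (beta * a1) / m) with (2 * (beta * a1 / m)) by (field; lra); lra.
Qed.

End Species.

Lemma sumR_ext (F1 F2 : nat -> R) m : (forall k, (k < m)%nat -> F1 k = F2 k) ->
  sumR m F1 = sumR m F2.
Proof.
  induction m as [|m IH]; intros H; simpl; [reflexivity|].
  rewrite IH, H; [reflexivity|lia|intros; apply H; lia].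
Qed.

Lemma sumR_ge0 (F : nat -> R) m : (forall k, (k < m)%nat -> 0 <= F k) -> 0 <= sumR m F.
Proof.
  induction m as [|m IH]; intros H; simpl; [lra|].
  assert (0 <= sumR m F) by (apply IH; intros; apply H; lia).
  assert (0 <= F m) by (apply H; lia); lra.
Qed.

Lemma sumR_ge_term (F : nat -> R) m j : (forall k, (k < m)%nat -> 0 <= F k) -> (j < m)%nat ->
  F j <= sumR m F.
Proof.
  induction m as [|m IH]; intros H Hj; simpl; [lia|].
  destruct (Nat.eq_dec j m) as [->|Hjm].
  - assert (0 <= sumR m F) by (apply sumR_ge0; intros; apply H; lia); lra.
  - assert (F j <= sumR m F) by (apply IH; [intros; apply H|]; lia).
    assert (0 <= F m) by (apply H; lia); lra.
Qed.

Lemma continuity_sumR (F : nat -> R -> R) m : (forall k, (k < m)%nat -> continuity (F k)) ->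
  continuity (fun t => sumR m (fun k => F k t)).
Proof.
  induction m as [|m IH]; intros H; simpl.
  - apply continuity_const; intros ? ?; reflexivity.
  - apply (continuity_plus (fun t => sumR m (fun k => F k t)) (F m));
      [apply IH; intros; apply H|apply H]; lia.
Qed.

Lemma sumR_bounded (F : nat -> R -> R) m :
  (forall k, (k < m)%nat -> exists B, forall t, 0 <= t -> F k t <= B) ->
  exists B, forall t, 0 <= t -> sumR m (fun k => F k t) <= B.
Proof.
  induction m as [|m IH]; intros H; simpl.
  - exists 0; intros; lra.
  - destruct IH as [B1 H1]; [intros; apply H; lia|].
    destruct (H m) as [B2 H2]; [lia|].
    exists (B1 + B2); intros t Ht; specialize (H1 t Ht); specialize (H2 t Ht); lra.
Qed.

Lemma delay_reaches_zero (g tau : R -> R) c : continuity g -> (forall x, 0 < g x) -> 0 < c ->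
  (forall t, 0 <= t -> c <= g t) -> (forall t, 0 <= t -> RInt g (t - tau t) t = 1) ->
  exists t, t > 0 /\ t - tau t = 0.
Proof.
  intros Hg Hpos Hc Hlow Hdelay.
  assert (Hincr : forall x y, x < y -> primitive g x < primitive g y)
    by (apply primitive_lt; auto).
  assert (Hc' : 0 < / c) by (apply Rinv_0_lt_compat, Hc).
  assert (H1 : 1 <= primitive g (/ c)).
  { assert (L := RInt_ge_const g 0 (/ c) c Hg ltac:(lra) ltac:(intros; apply Hlow; lra)).
    unfold primitive; replace ((/ c - 0) * c) with 1 in L by (field; lra); exact L. }
  destruct (IVT_gen (primitive g) 0 (/ c) 1 (primitive_continuity g Hg)) as [t [Ht Et]].
  { rewrite primitive_0, Rmin_left, Rmax_right; lra. }
  rewrite Rmin_left, Rmax_right in Ht by lra.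
  assert (Htpos : 0 < t).
  { destruct Ht as [[Ht0|Ht0] _]; [exact Ht0|subst t; rewrite primitive_0 in Et; lra]. }
  exists t; split; [exact Htpos|].
  apply (strict_incr_injective (primitive g) Hincr); rewrite primitive_0.
  specialize (Hdelay t (Rlt_le _ _ Htpos)); rewrite <- (primitive_sub g Hg) in Hdelay; lra.
Qed.

Section System.

Variables (n : nat) (muA muJ beta : nat -> R) (zeta : nat -> nat -> R) (f : nat -> R -> R)
  (phi : nat -> R -> R) (tau0 : nat -> R) (A : nat -> R -> R) (tau : nat -> R -> R).
Hypothesis HA : AssumptionA n muA muJ beta zeta f.
Hypothesis Hsol : is_solution n muA muJ beta zeta f phi tau0 A tau.
Hypothesis Hinit : forall i, (i < n)%nat ->
  integral_eq (fun s => f i (Zfun n zeta phi i s)) (- tau0 i) 0 1.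

Lemma f_nonincreasing i : (i < n)%nat -> forall x y, x <= y -> f i y <= f i x.
Proof.
  intros Hi; destruct (HA i Hi) as (_ & _ & _ & _ & _ & _ & [f' [Hf' [_ Hneg]]] & _).
  intros x y Hxy; apply (nonincreasing_of_derivative_nonpos (f i) f'); auto.
  intros z _; apply derivable_continuous_pt; exists (f' z); apply Hf'.
Qed.

Lemma continuity_f_Zfun i : (i < n)%nat -> continuity (fun s => f i (Zfun n zeta A i s)).
Proof.
  intros Hi x; destruct (HA i Hi) as (_ & _ & _ & _ & _ & _ & [f' [Hf' _]] & _).
  apply (continuity_pt_comp (Zfun n zeta A i) (f i)).
  - apply (continuity_sumR (fun k t => zeta i k * A k t)); intros k Hk.
    apply (continuity_scal (A k)); apply (Hsol k Hk).
  - apply derivable_continuous_pt; exists (f' (Zfun n zeta A i x)); apply Hf'.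
Qed.

Lemma Zfun_ge_diag i s : (i < n)%nat -> zeta i i * A i s <= Zfun n zeta A i s.
Proof.
  intros Hi; destruct (HA i Hi) as (_ & _ & _ & _ & Hzeta & _).
  apply (sumR_ge_term (fun k => zeta i k * A k s)); [|exact Hi].
  intros k Hk; specialize (Hzeta k Hk); assert (0 <= A k s) by apply (Hsol k Hk); nra.
Qed.

Lemma delay_integral_one i t : (i < n)%nat -> 0 <= t ->
  RInt (fun s => f i (Zfun n zeta A i s)) (t - tau i t) t = 1.
Proof.
  intros Hi Ht; destruct (Hsol i Hi) as (_ & _ & _ & _ & _ & _ & _ & Hc).
  destruct (Hc t Ht) as [v [I1 I2]].
  rewrite (RInt_of_integral_eq _ _ _ _ I1), <- (RInt_of_integral_eq _ _ _ _ I2).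
  apply RInt_of_integral_eq, Hinit, Hi.
Qed.

Lemma initial_integral_one i : (i < n)%nat ->
  RInt (fun s => f i (Zfun n zeta A i s)) (- tau0 i) 0 = 1.
Proof.
  intros Hi; rewrite <- (RInt_of_integral_eq _ _ _ _ (Hinit i Hi)).
  apply RInt_ext; intros x [_ Hx].
  destruct (Hsol i Hi) as (_ & _ & _ & _ & Htau0 & _).
  rewrite Rmax_right in Hx by lra.
  unfold Zfun; f_equal; apply sumR_ext; intros k Hk.
  destruct (Hsol k Hk) as (_ & _ & HAphi & _); rewrite HAphi by lra; reflexivity.
Qed.

Lemma f_Zfun_small i : (i < n)%nat -> forall eps, 0 < eps ->
  exists Y, forall s, Y <= A i s -> f i (Zfun n zeta A i s) <= eps.
Proof.
  intros Hi eps Heps.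
  destruct (HA i Hi) as (_ & _ & _ & Hzeta & _ & _ & _ & Hfpos & Hflim & _).
  destruct (Hflim eps Heps) as [X HX]; exists (X / zeta i i); intros s Hs.
  apply (Rle_trans _ (f i X)); [apply (f_nonincreasing i Hi)|].
  - apply (Rle_trans _ (zeta i i * A i s)); [|apply Zfun_ge_diag, Hi].
    apply (Rmult_le_compat_l (zeta i i)) in Hs; [|lra].
    replace (zeta i i * (X / zeta i i)) with X in Hs by (field; lra); exact Hs.
  - specialize (HX X (Rge_refl X)); rewrite Rabs_right in HX; [lra|left; apply Hfpos].
Qed.

Lemma component_bounded i : (i < n)%nat -> exists B, forall t, 0 <= t -> A i t <= B.
Proof.
  intros Hi.
  destruct (HA i Hi) as (HmuA & HmuJ & Hbeta & _ & _ & _ & _ & Hfpos & _).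
  destruct (Hsol i Hi) as (HAc & HAge0 & _ & Htau & Htau0 & _ & HAd & _).
  apply (A_bounded (A i) (fun s => f i (Zfun n zeta A i s)) (tau i)
           (muA i) (muJ i) (beta i) (tau0 i));
    auto using continuity_f_Zfun, delay_integral_one, initial_integral_one; try lra.
  - intros x; apply Rgt_lt, Hfpos.
  - apply f_Zfun_small, Hi.
  - intros t Ht; apply derivable_pt_lim_of_deriv_nonneg; [exact Ht|apply HAd; lra].
Qed.

Lemma Zfun_bounded i : (i < n)%nat -> exists B, forall t, 0 <= t -> Zfun n zeta A i t <= B.
Proof.
  intros Hi; apply (sumR_bounded (fun k t => zeta i k * A k t)); intros k Hk.
  destruct (component_bounded k Hk) as [B HB]; exists (zeta i k * B); intros t Ht.
  destruct (HA i Hi) as (_ & _ & _ & _ & Hzeta & _).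
  apply Rmult_le_compat_l; [apply Rge_le, Hzeta, Hk|apply HB, Ht].
Qed.

End System.

Theorem lemma3p3 (n : nat) (alpha : R) (muA muJ beta : nat -> R)
  (zeta : nat -> nat -> R) (f : nat -> R -> R) (phi : nat -> R -> R)
  (tau0 : nat -> R) (A : nat -> R -> R) (tau : nat -> R -> R) :
  alpha > 0 ->
  AssumptionA n muA muJ beta zeta f ->
  (forall i, (i < n)%nat -> X_alpha alpha (phi i) /\ (forall s, s <= 0 -> 0 <= phi i s)) ->
  is_solution n muA muJ beta zeta f phi tau0 A tau ->
  (forall i, (i < n)%nat ->
     integral_eq (fun s => f i (Zfun n zeta phi i s)) (- tau0 i) 0 1) ->
  forall i, (i < n)%nat -> exists t, t > 0 /\ t - tau i t = 0.
Proof.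
  intros _ HA _ Hsol Hinit i Hi.
  destruct (Zfun_bounded n muA muJ beta zeta f phi tau0 A tau HA Hsol Hinit i Hi) as [Zm HZm].
  destruct (HA i Hi) as (_ & _ & _ & _ & _ & _ & _ & Hfpos & _).
  apply (delay_reaches_zero (fun s => f i (Zfun n zeta A i s)) (tau i) (f i Zm)).
  - apply (continuity_f_Zfun n muA muJ beta zeta f phi tau0 A tau HA Hsol i Hi).
  - intros x; apply Rgt_lt, Hfpos.
  - apply Rgt_lt, Hfpos.
  - intros t Ht; apply (f_nonincreasing n muA muJ beta zeta f HA i Hi), HZm, Ht.
  - intros t Ht.
    apply (delay_integral_one n muA muJ beta zeta f phi tau0 A tau Hsol Hinit i t Hi Ht).
Qed.
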